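(* Let $\lambda>0$, $0<\varepsilon_g<1$, $f$ twice continuously differentiable satisfying $f(y)\le f(x)+\nabla f(x)^\top(y-x)+\frac12(y-x)^\top\nabla^2f(x)(y-x)+\frac{L_H}6\|y-x\|^3$, and $\varphi=f+\lambda\|\cdot\|_1$. Let $x^k\in\mathbb{R}^n$, $I^{k\varepsilon}_+=\{i:x^k_i>\varepsilon_g^{1/2}\}$, $I^{k\varepsilon}_-=\{i:x^k_i<-\varepsilon_g^{1/2}\}$, $I^{k\varepsilon}_{\neq0}=I^{k\varepsilon}_+\cup I^{k\varepsilon}_-$, $I^{k\varepsilon}_0=\{i:|x^k_i|\le\varepsilon_g^{1/2}\}$, and let $d^k\in\mathbb{R}^n$ satisfy $d^k_{I^{k\varepsilon}_0}=0$ (as in a Newton-CG step of PGN2CM). Let $H^k_{\neq0\varepsilon}=(\nabla^2f(x^k))_{I^{k\varepsilon}_{\neq0}}$, $g^k_{\neq0\varepsilon}=g^\varepsilon(x^k)_{I^{k\varepsilon}_{\neq0}}$, $d^k_{\neq0\varepsilon}=d^k_{I^{k\varepsilon}_{\neq0}}$, and $t^k_+=\min_{i\in J^k_+}\{-x^k_i/d^k_i\}$, $t^k_-=\min_{i\in J^k_-}\{-x^k_i/d^k_i\}$ with $J^k_+=\{i\in I^{k\varepsilon}_+:d^k_i<0\}$, $J^k_-=\{i\in I^{k\varepsilon}_-:d^k_i>0\}$ (each $+\infty$ if the set is empty). Then for any $t\in(0,\min\{t^k_+,t^k_-\}]$, $$\varphi(x^k+td^k)\le\varphi(x^k)+t(g^k_{\neq0\varepsilon})^\top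 d^k_{\neq0\varepsilon}+\frac12t^2(d^k_{\neq0\varepsilon})^\top H^k_{\neq0\varepsilon}d^k_{\neq0\varepsilon}+\frac{L_H}6t^3\|d^k_{\neq0\varepsilon}\|^3.$$
   Context: $g^\varepsilon(x)$: $g^\varepsilon_i=(\nabla f(x))_i+\lambda$ if $x_i>\varepsilon_g^{1/2}$, $(\nabla f(x))_i-\lambda$ if $x_i<-\varepsilon_g^{1/2}$, and $(\nabla f(x))_i-\min\{\max\{-\lambda-\varepsilon_g^{3/4},(\nabla f(x))_i\},\lambda+\varepsilon_g^{3/4}\}$ if $|x_i|\le\varepsilon_g^{1/2}$. $A_J$ denotes principal submatrix/subvector on index set $J$. In the paper the cubic bound on $f$ holds with constant $L_H$ on the level set $\{x:\varphi(x)\le\varphi(x^0)\}$. *)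

From HB Require Import structures.
From mathcomp Require Import all_boot all_order all_algebra.
From mathcomp Require Import all_classical all_reals all_analysis.
Set Implicit Arguments. Unset Strict Implicit. Unset Printing Implicit Defensive.
Import Order.TTheory GRing.Theory Num.Theory.
Import numFieldNormedType.Exports.
Local Open Scope ring_scope.

Section Defs.
Context {R : realType} {n : nat}.

Definition evec (i : 'I_n) : 'rV[R]_n := delta_mx 0 i.

Definition partial (i : 'I_n) (f : 'rV[R]_n -> R) : 'rV[R]_n -> R :=
  fun x => 'D_(evec i) f x.

Definition grad (f : 'rV[R]_n -> R) (x : 'rV[R]_n) : 'rV[R]_n :=
  \row_i partial i f x.
Definition hess (f : 'rV[R]_n -> R) (x : 'rV[R]_n) : 'M[R]_n :=
  \matrix_(i, j) partial j (partial i f) x.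

Definition C2 (f : 'rV[R]_n -> R) : Prop :=
  (forall x, differentiable f x) /\
  (forall i x, differentiable (partial i f) x) /\
  (forall i j, continuous (partial j (partial i f))).

Definition norm2 (v : 'rV[R]_n) : R := Num.sqrt (\sum_i v 0 i ^+ 2).
Definition norm1 (v : 'rV[R]_n) : R := \sum_i `|v 0 i|.

Definition geps (f : 'rV[R]_n -> R) (lam eg : R) (x : 'rV[R]_n) : 'rV[R]_n :=
  \row_i (let gi := grad f x 0 i in
          if Num.sqrt eg < x 0 i then gi + lam
          else if x 0 i < - Num.sqrt eg then gi - lam
          else gi - Num.min (Num.max (- lam - powR eg (3/4)) gi)
                            (lam + powR eg (3/4))).

Definition Iplus (eg : R) (x : 'rV[R]_n) : pred 'I_n :=
  fun i => Num.sqrt eg < x 0 i.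
Definition Iminus (eg : R) (x : 'rV[R]_n) : pred 'I_n :=
  fun i => x 0 i < - Num.sqrt eg.
Definition Inz (eg : R) (x : 'rV[R]_n) : pred 'I_n :=
  fun i => Iplus eg x i || Iminus eg x i.
Definition I0 (eg : R) (x : 'rV[R]_n) : pred 'I_n :=
  fun i => `|x 0 i| <= Num.sqrt eg.

(* restriction of a vector to an index set (subvector, padded by zeros) *)
Definition restr (J : pred 'I_n) (v : 'rV[R]_n) : 'rV[R]_n :=
  \row_i (if J i then v 0 i else 0).

Definition dotJ (J : pred 'I_n) (g d : 'rV[R]_n) : R :=
  \sum_(i | J i) g 0 i * d 0 i.
Definition quadJ (J : pred 'I_n) (H : 'M[R]_n) (d : 'rV[R]_n) : R :=
  \sum_(i | J i) \sum_(j | J j) d 0 i * H i j * d 0 j.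

Definition tmin (J : pred 'I_n) (x d : 'rV[R]_n) : \bar R :=
  \big[Order.min/+oo%E]_(i | J i) ((- x 0 i / d 0 i)%:E).

Definition Jplus (eg : R) (x d : 'rV[R]_n) : pred 'I_n :=
  fun i => Iplus eg x i && (d 0 i < 0).
Definition Jminus (eg : R) (x d : 'rV[R]_n) : pred 'I_n :=
  fun i => Iminus eg x i && (0 < d 0 i).

End Defs.

(* Outside the index set I_0 the step d keeps, for t below the ratio-test
   bounds t_+ and t_-, every coordinate of x on its side of 0, so the l1 norm
   is affine along the step: |x_i + t d_i| = |x_i| + t sg(x_i) d_i.  The
   subgradient term lam sg(x_i) is exactly what g^eps adds to the gradient on
   I_{!=0}, and adding lam times this identity to the cubic upper model of f
   at x, evaluated at y = x + t d (with d supported on I_{!=0}), gives the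
   claim. *)
From HB Require Import structures.
From mathcomp Require Import all_boot all_order all_algebra.
From mathcomp Require Import all_classical all_reals all_analysis.
From mathcomp Require Import ring lra.
Import Order.TTheory GRing.Theory Num.Theory.
Import numFieldNormedType.Exports.
Local Open Scope ring_scope.

Lemma normrD_sg (R : realDomainType) (x y : R) :
  x != 0 -> 0 <= Num.sg x * (x + y) -> `|x + y| = `|x| + Num.sg x * y.
Proof.
move=> x0 sgxy; have norm_sgx : `|Num.sg x| = 1 by rewrite normr_sg x0.
rewrite -[LHS]mul1r -norm_sgx -normrM ger0_norm //.
by rewrite mulrDr -normrEsg.
Qed.

Lemma ratio_test_ge0 (R : realFieldType) (x d t : R) :
  0 <= x -> 0 <= t -> (d < 0 -> t <= - x / d) -> 0 <= x + t * d.
Proof.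
move=> x0 t0 tle; have [d_neg | d_ge0] := ltP d 0.
  by move: (tle d_neg); rewrite ler_ndivlMr // -subr_ge0 opprK addrC.
by rewrite addr_ge0 // mulr_ge0.
Qed.

Section RestrictedStep.
Context {R : realType} {n : nat}.
Implicit Types (J : pred 'I_n) (x d g : 'rV[R]_n).

Lemma sum_supported J (F : 'I_n -> R) :
  (forall i, ~~ J i -> F i = 0) -> \sum_i F i = \sum_(i | J i) F i.
Proof.
move=> F0; rewrite [RHS]big_mkcond; apply: eq_bigr => i _.
by case: ifPn => // /F0.
Qed.

Lemma dotJ_supported J g d :
  (forall i, ~~ J i -> d 0 i = 0) -> dotJ predT g d = dotJ J g d.
Proof. by move=> d0; apply: (sum_supported J) => i /d0 ->; rewrite mulr0. Qed.

Lemma quadJ_supported J (H : 'M[R]_n) d :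
  (forall i, ~~ J i -> d 0 i = 0) -> quadJ predT H d = quadJ J H d.
Proof.
move=> d0; rewrite /quadJ (sum_supported J) => [|i /d0 di0].
  by apply: eq_bigr => i _; apply: (sum_supported J) => j /d0 ->; rewrite mulr0.
by rewrite big1 // => j _; rewrite di0 !mul0r.
Qed.

Lemma dotJZ J g d (t : R) : dotJ J g (t *: d) = t * dotJ J g d.
Proof.
by rewrite /dotJ mulr_sumr; apply: eq_bigr => i _; rewrite mxE mulrCA.
Qed.

Lemma quadJZ J (H : 'M[R]_n) d (t : R) :
  quadJ J H (t *: d) = t ^+ 2 * quadJ J H d.
Proof.
rewrite /quadJ mulr_sumr; apply: eq_bigr => i _; rewrite mulr_sumr.
by apply: eq_bigr => j _; rewrite !mxE; ring.
Qed.

Lemma norm2Z d (t : R) : norm2 (t *: d) = `|t| * norm2 d.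
Proof.
rewrite /norm2 -sqrtr_sqr -sqrtrM ?sqr_ge0 // mulr_sumr.
by congr Num.sqrt; apply: eq_bigr => i _; rewrite mxE exprMn.
Qed.

Lemma cubic_model_step x {f : 'rV[R]_n -> R} {LH : R} {J d} {t : R} :
  (forall x y : 'rV[R]_n,
     f y <= f x + dotJ predT (grad f x) (y - x)
            + 2^-1 * quadJ predT (hess f x) (y - x)
            + LH / 6 * norm2 (y - x) ^+ 3) ->
  (forall i, ~~ J i -> d 0 i = 0) -> 0 <= t ->
  f (x + t *: d) <= f x + t * dotJ J (grad f x) d
                    + 2^-1 * t ^+ 2 * quadJ J (hess f x) d
                    + LH / 6 * t ^+ 3 * norm2 d ^+ 3.
Proof.
move=> cubic d0 t0; have := cubic x (x + t *: d).
have td0 i : ~~ J i -> (t *: d) 0 i = 0.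
  by move/d0; rewrite mxE => ->; rewrite mulr0.
rewrite [x + _ - x]addrC addKr.
rewrite (dotJ_supported _ _ _ td0) (quadJ_supported _ _ _ td0) dotJZ quadJZ.
by rewrite norm2Z ger0_norm // exprMn !mulrA.
Qed.

Lemma tmin_le J x d i (t : R) :
  J i -> (t%:E <= tmin J x d)%E -> t <= - x 0 i / d 0 i.
Proof. by move=> Ji /le_trans/(_ (bigmin_le_cond _ _ Ji)); rewrite lee_fin. Qed.

Lemma Iplus_gt0 {eg : R} {x i} : Iplus eg x i -> 0 < x 0 i.
Proof. exact/le_lt_trans/sqrtr_ge0. Qed.

Lemma Iminus_lt0 {eg : R} {x i} : Iminus eg x i -> x 0 i < 0.
Proof. by move/lt_le_trans; apply; rewrite oppr_le0 sqrtr_ge0. Qed.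

Lemma Inz_neq0 (eg : R) x i : Inz eg x i -> x 0 i != 0.
Proof. by case/orP => [/Iplus_gt0/lt0r_neq0 | /Iminus_lt0/ltr0_neq0]. Qed.

Lemma Inz_I0 (eg : R) x i : ~~ Inz eg x i -> I0 eg x i.
Proof.
by rewrite /Inz /Iplus /Iminus /I0 negb_or -!leNgt ler_norml => /andP[-> ->].
Qed.

Section Step.
Context {eg : R} {x d : 'rV[R]_n} {t : R}.
Hypothesis d_I0 : forall i, I0 eg x i -> d 0 i = 0.

Lemma d_Inz i : ~~ Inz eg x i -> d 0 i = 0.
Proof. by move/Inz_I0/d_I0. Qed.

Lemma restr_Inz : restr (Inz eg x) d = d.
Proof. by apply/rowP => i; rewrite mxE; case: ifPn => // /d_Inz ->. Qed.

Hypothesis t_ge0 : 0 <= t.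
Hypothesis t_le : (t%:E <= Order.min (tmin (Jplus eg x d) x d)
                                     (tmin (Jminus eg x d) x d))%E.

Lemma step_keeps_sign i :
  Inz eg x i -> 0 <= Num.sg (x 0 i) * (x 0 i + t * d 0 i).
Proof.
have [tJp tJm] : (t%:E <= tmin (Jplus eg x d) x d)%E /\
                 (t%:E <= tmin (Jminus eg x d) x d)%E.
  by move: t_le; rewrite le_min => /andP[].
case/orP => [xpos | xneg].
- rewrite (gtr0_sg (Iplus_gt0 xpos)) mul1r; apply: ratio_test_ge0 => //.
    exact: ltW (Iplus_gt0 xpos).
  by move=> dneg; apply: tmin_le tJp; rewrite /Jplus xpos dneg.
- rewrite (ltr0_sg (Iminus_lt0 xneg)) mulN1r opprD -mulrN.
  apply: ratio_test_ge0 => //.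
    by rewrite oppr_ge0 ltW ?(Iminus_lt0 xneg).
  rewrite oppr_lt0 opprK invrN mulrN -mulNr => dpos.
  by apply: tmin_le tJm; rewrite /Jminus xneg dpos.
Qed.

Lemma norm1_step :
  norm1 (x + t *: d) = norm1 x + t * dotJ (Inz eg x) (map_mx Num.sg x) d.
Proof.
rewrite /norm1 -dotJZ -dotJ_supported => [|i /d_Inz di0]; last first.
  by rewrite mxE di0 mulr0.
rewrite -big_split; apply: eq_bigr => i _; rewrite !mxE.
have [Ii | /d_Inz ->] := boolP (Inz eg x i); rewrite /=.
  by apply: normrD_sg; [exact: Inz_neq0 Ii | exact: step_keeps_sign].
by rewrite !mulr0 !addr0.
Qed.

End Step.

Lemma geps_Inz (f : 'rV[R]_n -> R) (lam eg : R) x i : Inz eg x i ->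
  geps f lam eg x 0 i = grad f x 0 i + lam * Num.sg (x 0 i).
Proof.
rewrite /geps mxE /Inz /Iplus /Iminus; case/orP => [xpos | xneg].
  by rewrite xpos (gtr0_sg (Iplus_gt0 xpos)) mulr1.
rewrite (ltr0_sg (Iminus_lt0 xneg)) mulrN1 xneg ifF //.
apply/negbTE; rewrite -leNgt.
exact: ltW (lt_le_trans (Iminus_lt0 xneg) (sqrtr_ge0 eg)).
Qed.

Lemma dotJ_geps (f : 'rV[R]_n -> R) (lam eg : R) x d :
  dotJ (Inz eg x) (geps f lam eg x) d
  = dotJ (Inz eg x) (grad f x) d + lam * dotJ (Inz eg x) (map_mx Num.sg x) d.
Proof.
rewrite /dotJ mulr_sumr -big_split; apply: eq_bigr => i Ii.
by rewrite geps_Inz // !mxE /= mulrDl mulrA.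
Qed.

End RestrictedStep.

Theorem lemma8 (R : realType) (n : nat) (f : 'rV[R]_n -> R) (LH lam eg : R)
  (xk dk : 'rV[R]_n) (t : R) :
  0 < lam -> 0 < eg -> eg < 1 ->
  C2 f ->
  (forall x y : 'rV[R]_n,
     f y <= f x + dotJ predT (grad f x) (y - x)
            + 2^-1 * quadJ predT (hess f x) (y - x)
            + LH / 6 * norm2 (y - x) ^+ 3) ->
  (forall i, I0 eg xk i -> dk 0 i = 0) ->
  0 < t ->
  (t%:E <= Order.min (tmin (Jplus eg xk dk) xk dk)
                     (tmin (Jminus eg xk dk) xk dk))%E ->
  let phi := fun x => f x + lam * norm1 x in
  phi (xk + t *: dk) <=
    phi xk + t * dotJ (Inz eg xk) (geps f lam eg xk) (restr (Inz eg xk) dk)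
    + 2^-1 * t ^+ 2 * quadJ (Inz eg xk) (hess f xk) (restr (Inz eg xk) dk)
    + LH / 6 * t ^+ 3 * norm2 (restr (Inz eg xk) dk) ^+ 3.
Proof.
move=> _ _ _ _ cubic d_I0 /ltW t_ge0 t_le /=.
rewrite (restr_Inz d_I0) (norm1_step d_I0 t_ge0 t_le) dotJ_geps.
have := cubic_model_step xk cubic (d_Inz d_I0) t_ge0.
(* abstracting the atoms keeps lra fast *)
move: (f _) (f xk) (norm1 xk) (dotJ _ (grad f xk) dk) (dotJ _ (map_mx _ xk) dk).
move: (quadJ _ _ _) (norm2 dk) => Q N fy fx N1 G S.
lra.
Qed.
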